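(* Assume $K_1\subseteq K_2\subseteq\cdots\subseteq K_n\subseteq\mathbb F_q$ are subfields, $d_i=|K_i|$. Let $f\in\mathbb F_q[X_1,\dots,X_n]$ have degree $d=\sum_{i=1}^k(d_i-1)+\ell$ with $0\le k<n$ and $0<\ell\le d_{k+1}-1$, and suppose no monomial occurring in $f$ is divisible by $X_i^{d_i}$ for any $i\in\{1,\dots,n\}$. If the Hamming weight of $\Psi(f)$ equals $(d_{k+1}-\ell)\prod_{i=k+2}^n d_i$, then there exist $j\in\{1,\dots,k+1\}$ with $d_j\ge d_{k+1}-\ell$ and distinct indices $t_1,\dots,t_{k+1}\in\{1,\dots,n\}$ with $K_{t_i}=K_i$ for all $i\in\{1,\dots,k+1\}$, such that the monomial $$X_{t_j}^{\,d_j-(d_{k+1}-\ell)}\prod_{\substack{i=1\\ i\ne j}}^{k+1}X_{t_i}^{\,d_i-1}$$ occurs in $f$ with nonzero coefficient.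
   Context: $\mathcal X=K_1\times\cdots\times K_n=\{\boldsymbol\alpha_1,\dots,\boldsymbol\alpha_m\}$ (fixed enumeration), $m=\prod d_i$, and $\Psi:\mathbb F_q[X_1,\dots,X_n]\to\mathbb F_q^m$, $f\mapsto(f(\boldsymbol\alpha_1),\dots,f(\boldsymbol\alpha_m))$. Empty products equal $1$. *)

From HB Require Import structures.
From mathcomp Require Import all_boot all_algebra.
From mathcomp Require Import mpoly.
Set Implicit Arguments. Unset Strict Implicit. Unset Printing Implicit Defensive.
Import GRing.Theory.
Local Open Scope ring_scope.

Definition is_subfield (F : fieldType) (S : {pred F}) : Prop :=
  [/\ 1 \in S,
      forall x y, x \in S -> y \in S -> x - y \in S,
      forall x y, x \in S -> y \in S -> x * y \in S
    & forall x, x \in S -> x^-1 \in S].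

Definition grid (F : finFieldType) (n : nat) (K : 'I_n -> {set F})
  : {set {ffun 'I_n -> F}} :=
  [set a : {ffun 'I_n -> F} | [forall i, a i \in K i]].

Definition Psi (F : finFieldType) (n : nat) (K : 'I_n -> {set F})
  (f : {mpoly F[n]}) : seq F :=
  [seq f.@[fun i => a i] | a : {ffun 'I_n -> F} <- enum (grid K)].

Definition hweight (F : finFieldType) (w : seq F) : nat :=
  count (fun x => x != 0) w.

From HB Require Import structures.
From mathcomp Require Import all_boot all_algebra.
From mathcomp Require Import mpoly.
From mathcomp Require Import zify.

(* Let X = K_1 x ... x K_n with K_1 <= ... <= K_n, d_i = |K_i|, and let
   a = lead(f) be the leading monomial of f for the degree-compatible
   monomial order of mpoly, so that deg f = |a|.

   1. Staircase lemma (arithmetic, on nat): if d is nondecreasing, a_i < d_i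
      and |a| = sum_(i<=k) (d_i - 1) + l, then
        prod_i (d_i - a_i) >= (d_(k+1) - l) * prod_(i>k+1) d_i,
      with equality only for "staircase" vectors a, which are exactly the
      monomials described in the theorem.  Induction on n, removing the
      coordinate of smallest size.
   2. Footprint bound: f is non-zero on at least prod_i (d_i - a_i) points
      of X.  Both this bound and the fact that a polynomial whose leading
      monomial is reduced (a_i < d_i) cannot vanish on X are obtained by
      counting: evaluation identifies reduced polynomials with functions on
      X, using Fermat's little theorem in each K_i to reduce exponents.
   3. The weight hypothesis says that the bound of 2 is attained, so the
      bound of 1 is tight for a = lead(f); equal sizes in the chain of
      subfields then give equal subfields. *)

Set Implicit Arguments.
Unset Strict Implicit.
Unset Printing Implicit Defensive.

(* The exponent vector a (indices in [0, n)) is a staircase of level (k, l)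
   for the sizes s: after an injective relabelling t of the first k+1
   indices that preserves sizes, a is maximal (s_i - 1) at every t i except
   one index j, where it leaves exactly s_k - l residues, and a vanishes
   off the image of t. *)
Definition staircase_shape (n : nat) (s a : nat -> nat) (k l : nat) : Prop :=
  exists j (t : nat -> nat),
  [/\ j <= k /\ s k - l <= s j,
      forall i, i <= k -> t i < n /\ s (t i) = s i,
      forall i i', i <= k -> i' <= k -> t i = t i' -> i = i',
      forall i, i <= k -> a (t i) = (if i == j then s i - (s k - l) else s i - 1)
    & forall x, x < n -> (forall i, i <= k -> t i != x) -> a x = 0].

Definition staircase_bound (n : nat) (s a : nat -> nat) (k l : nat) : Prop :=
  (s k - l) * \prod_(k.+1 <= i < n) s i <= \prod_(0 <= i < n) (s i - a i) /\
  (\prod_(0 <= i < n) (s i - a i) <= (s k - l) * \prod_(k.+1 <= i < n) s i ->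
     staircase_shape n s a k l).

Lemma staircase_shape_single n (s a : nat -> nat) l :
  (forall x, 0 < x < n.+1 -> a x = 0) -> a 0 = l -> l <= s 0 ->
  staircase_shape n.+1 s a 0 l.
Proof.
move=> a_rest a0 ls0; exists 0, (fun _ => 0); split=> //.
- by rewrite leq_subr.
- by move=> i; rewrite leqn0 => /eqP ->.
- by move=> i i'; rewrite !leqn0 => /eqP -> /eqP ->.
- by move=> i; rewrite leqn0 => /eqP -> /=; lia.
- move=> [|x] xn tx; first by have := tx 0 (leqnn 0).
  exact: a_rest.
Qed.

(* A staircase of the tail extends to the whole vector when a_0 = 0 and the
   first k+2 sizes coincide (so index 0 can be traded for index 1). *)
Lemma staircase_shape_shift n (s a : nat -> nat) k l :
  staircase_shape n (fun i => s i.+1) (fun i => a i.+1) k l -> a 0 = 0 ->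
  (forall i, i <= k -> s i.+1 = s i) -> staircase_shape n.+1 s a k l.
Proof.
move=> [j [t [[jk sj] t_lt t_inj a_t a_out]]] a0 s_flat.
exists j, (fun i => (t i).+1); split.
- by split=> //; rewrite -(s_flat k) // -(s_flat j).
- by move=> i ik; have [? ->] := t_lt i ik; rewrite s_flat.
- by move=> i i' ik i'k [] /t_inj ->.
- by move=> i ik; rewrite a_t // !s_flat.
- by move=> [|x] xn tx //; apply: a_out.
Qed.

Lemma staircase_shape_cons_full n (s a : nat -> nat) k l :
  staircase_shape n (fun i => s i.+1) (fun i => a i.+1) k l -> a 0 = s 0 - 1 ->
  staircase_shape n.+1 s a k.+1 l.
Proof.
move=> [j [t [[jk sj] t_lt t_inj a_t a_out]]] a0.
exists j.+1, (fun i => if i is i'.+1 then (t i').+1 else 0); split=> //.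
- by move=> [|i] ik //=; have [] := t_lt i ik.
- by move=> [|i] [|i'] //= ik i'k [] /t_inj ->.
- by move=> [|i] ik //=; rewrite a_t.
- move=> [|x] xn tx; first by have := tx 0 isT.
  by apply: a_out => // i ik; have := tx i.+1 ik.
Qed.

(* Prepending index 0 as the partial step j = 0 of the staircase, when the
   tail is a staircase whose partial step is in fact full. *)
Lemma staircase_shape_cons_partial n (s a : nat -> nat) k l :
  staircase_shape n (fun i => s i.+1) (fun i => a i.+1) k (s k.+1).-1 ->
  l < s k.+1 -> a 0 + (s k.+1 - l) = s 0 -> staircase_shape n.+1 s a k.+1 l.
Proof.
move=> [j [t [[jk sj] t_lt t_inj a_t a_out]]] lsk a0.
exists 0, (fun i => if i is i'.+1 then (t i').+1 else 0); split=> //.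
- by split=> //; lia.
- by move=> [|i] ik //=; have [] := t_lt i ik.
- by move=> [|i] [|i'] //= ik i'k [] /t_inj ->.
- move=> [|i] ik /=; first by lia.
  by rewrite a_t //; case: ifP => _; lia.
- move=> [|x] xn tx; first by have := tx 0 isT.
  by apply: a_out => // i ik; have := tx i.+1 ik.
Qed.

Section StaircaseStep.

Variables (n : nat) (s a : nat -> nat).
Hypothesis s_mono : forall i j, i <= j < n.+1 -> s i <= s j.
Hypothesis a_lt_s : forall i, i < n.+1 -> a i < s i.
Hypothesis IH : forall k l, k < n -> 0 < l -> l < s k.+1 ->
  \sum_(0 <= i < n) a i.+1 = \sum_(0 <= i < k) (s i.+1 - 1) + l ->
  staircase_bound n (fun i => s i.+1) (fun i => a i.+1) k l.

Lemma tail_prod_gt0 m : 0 < \prod_(m <= i < n) s i.+1.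
Proof.
rewrite big_nat_cond; apply: prodn_cond_gt0 => i /andP[/andP[_ i_n] _].
by have := @a_lt_s i.+1 i_n; lia.
Qed.

Lemma tail_sum_le : \sum_(0 <= i < n) a i.+1 <= \sum_(0 <= i < n) (s i.+1 - 1).
Proof.
rewrite big_nat_cond [leqRHS]big_nat_cond; apply: leq_sum => i /andP[/andP[_ i_n] _].
by have := @a_lt_s i.+1 i_n; lia.
Qed.

Lemma staircase_bound_single l :
  a 0 = l -> \sum_(0 <= i < n.+1) a i = l -> staircase_bound n.+1 s a 0 l.
Proof.
move=> a0 sum_a.
have tail0 : \sum_(0 <= i < n) a i.+1 == 0 by move: sum_a; rewrite big_nat_recl //; lia.
have a_rest : forall x, 0 < x < n.+1 -> a x = 0.
  move=> [|x] // /andP[_ x_n]; apply/eqP; move: tail0.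
  by rewrite sum_nat_seq_eq0 => /allP /(_ x); rewrite mem_index_iota; apply.
rewrite /staircase_bound.
have -> : \prod_(0 <= i < n.+1) (s i - a i) = (s 0 - l) * \prod_(1 <= i < n.+1) s i.
  rewrite big_nat_recl // a0 big_add1; congr (_ * _).
  by apply: eq_big_nat => i /andP[_ i_n]; rewrite a_rest ?subn0.
split=> // _; apply: staircase_shape_single => //.
by rewrite -a0; exact/ltnW/a_lt_s.
Qed.

(* k = 0 and a_0 < l: moving the deficit l - a_0 onto coordinate 0 only
   decreases the product, strictly unless a_0 = 0 and s_1 = s_0. *)
Lemma staircase_bound_first_spread l :
  a 0 < l -> l < s 0 -> \sum_(0 <= i < n.+1) a i = l -> staircase_bound n.+1 s a 0 l.
Proof.
move=> a0_l l_s0; rewrite big_nat_recl // => sum_a.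
have n_gt0 : 0 < n.
  by rewrite lt0n; apply/negP => /eqP n0; move: sum_a; rewrite n0 big_geq //; lia.
have s01 : s 0 <= s 1 by apply: s_mono.
have [IH_le IH_eq] := @IH 0 (l - a 0) n_gt0 ltac:(lia) ltac:(lia)
  ltac:(rewrite (big_geq (leqnn 0)) add0n; lia).
set Q := \prod_(1 <= i < n) s i.+1 in IH_le IH_eq.
set P' := \prod_(0 <= i < n) (s i.+1 - a i.+1) in IH_le IH_eq.
have Q_gt0 : 0 < Q by apply: tail_prod_gt0.
rewrite /staircase_bound !big_nat_recl // -/P' -/Q.
have merge : (s 0 - l) * s 1 <= (s 0 - a 0) * (s 1 - (l - a 0)) by nia.
split; first by rewrite mulnA (leq_trans (leq_mul merge (leqnn Q))) // -mulnA leq_mul.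
move=> P_le.
have tight : (s 0 - a 0) * (s 1 - (l - a 0)) <= (s 0 - l) * s 1.
  rewrite -(leq_pmul2r Q_gt0) -!mulnA; exact: leq_trans (leq_mul (leqnn _) IH_le) P_le.
have [a00 s10] : a 0 = 0 /\ s 1 = s 0 by nia.
rewrite a00 subn0 s10 in IH_eq P_le.
apply: staircase_shape_shift => //; last by move=> i; rewrite leqn0 => /eqP ->.
by apply: IH_eq; rewrite -(leq_pmul2l (_ : 0 < s 0)) 1?mulnCA //; lia.
Qed.

(* k > 0, and coordinate 0 has slack g = s_0 - 1 - a_0 that the tail can
   absorb at level k - 1: merging the slack costs a factor g + 1, with
   equality only if g = 0 or the tail's partial step becomes full. *)
Lemma staircase_bound_succ_small k l :
  k < n -> 0 < l -> l + (s 0 - (a 0).+1) < s k.+1 ->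
  \sum_(0 <= i < n.+1) a i = \sum_(0 <= i < k.+1) (s i - 1) + l ->
  staircase_bound n.+1 s a k.+1 l.
Proof.
set g := s 0 - (a 0).+1 => k_n l_gt0 lg_lt; rewrite !big_nat_recl // => sum_a.
have a0_lt := @a_lt_s 0 (ltn0Sn n).
have [IH_le IH_eq] := @IH k (l + g) k_n ltac:(lia) lg_lt ltac:(rewrite /g; lia).
set Q := \prod_(k.+1 <= i < n) s i.+1 in IH_le IH_eq.
set P' := \prod_(0 <= i < n) (s i.+1 - a i.+1) in IH_le IH_eq.
have Q_gt0 : 0 < Q by apply: tail_prod_gt0.
rewrite /staircase_bound (big_nat_recl n 0) // -/P' big_add1 -/Q.
rewrite (_ : s 0 - a 0 = g.+1); last by rewrite /g; lia.
have s0_sk : s 0 <= s k.+1 by apply: s_mono; lia.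
have merge : s k.+1 - l <= g.+1 * (s k.+1 - (l + g)) by nia.
split; first by rewrite (leq_trans (leq_mul merge (leqnn Q))) // -mulnA leq_mul.
move=> P_le.
have P'_le : P' <= (s k.+1 - (l + g)) * Q.
  by rewrite -(leq_pmul2l (ltn0Sn g)) mulnA (leq_trans P_le) // leq_mul.
have tight : g.+1 * (s k.+1 - (l + g)) <= s k.+1 - l.
  rewrite -(leq_pmul2r Q_gt0) -mulnA; exact: leq_trans (leq_mul (leqnn _) IH_le) P_le.
have shape := IH_eq P'_le.
have [g0 | lg_max] : g = 0 \/ l + g = (s k.+1).-1 by nia.
- by apply: staircase_shape_cons_full; [rewrite g0 addn0 in shape | rewrite /g in g0; lia].
- by apply: staircase_shape_cons_partial; [rewrite -lg_max | lia | rewrite /g in lg_max; lia].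
Qed.

(* k > 0, and the slack of coordinate 0 overflows the tail's partial step:
   the tail is then at level k, and equality forces a_0 = 0 and equal sizes
   s_0 = ... = s_(k+1). *)
Lemma staircase_bound_succ_large k l :
  k < n -> 0 < l -> l < s k.+1 -> s k.+1 <= l + (s 0 - (a 0).+1) ->
  \sum_(0 <= i < n.+1) a i = \sum_(0 <= i < k.+1) (s i - 1) + l ->
  staircase_bound n.+1 s a k.+1 l.
Proof.
set g := s 0 - (a 0).+1 => k_n l_gt0 l_lt lg_ge; rewrite !big_nat_recl // => sum_a.
have a0_lt := @a_lt_s 0 (ltn0Sn n).
have sk_gt0 : 0 < s k.+1 by lia.
have k1_n : k.+1 < n.
  rewrite ltnNge; apply/negP => n_le; have n_eq : n = k.+1 by lia.
  by have := tail_sum_le; move: sum_a lg_ge; rewrite /g n_eq !big_nat_recr //=; lia.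
set l' := l + g - (s k.+1).-1.
have [IH_le IH_eq] := @IH k.+1 l' k1_n ltac:(rewrite /l'; lia)
  ltac:(have := @s_mono 0 k.+2; rewrite /l' /g; lia) ltac:(rewrite big_nat_recr //=; lia).
set Q := \prod_(k.+2 <= i < n) s i.+1 in IH_le IH_eq.
set P' := \prod_(0 <= i < n) (s i.+1 - a i.+1) in IH_le IH_eq.
have Q_gt0 : 0 < Q by apply: tail_prod_gt0.
rewrite /staircase_bound (big_nat_recl n 0) // -/P' big_add1 big_ltn //= -/Q.
rewrite (_ : s 0 - a 0 = g.+1); last by rewrite /g; lia.
have g_lt : g.+1 <= s k.+2 by have := @s_mono 0 k.+2; rewrite /g; lia.
have merge : (s k.+1 - l) * s k.+2 <= g.+1 * (s k.+2 - l') by rewrite /l'; nia.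
split; first by rewrite mulnA (leq_trans (leq_mul merge (leqnn Q))) // -mulnA leq_mul.
move=> P_le.
have P'_le : P' <= (s k.+2 - l') * Q.
  by rewrite -(leq_pmul2l (ltn0Sn g)) mulnA (leq_trans P_le) // mulnA leq_mul.
have tight : g.+1 * (s k.+2 - l') <= (s k.+1 - l) * s k.+2.
  rewrite -(leq_pmul2r Q_gt0) -!mulnA; exact: leq_trans (leq_mul (leqnn _) IH_le) P_le.
have g_eq : g.+1 = s k.+2 by rewrite /l' in tight; nia.
have [a00 s0_eq] : a 0 = 0 /\ s 0 = s k.+2 by have := @s_mono 0 k.+2; rewrite /g in g_eq; lia.
have s_flat : forall i, i <= k.+1 -> s i.+1 = s i.
  move=> i ik; have := @s_mono i i.+1; have := @s_mono i.+1 k.+2; have := @s_mono 0 i; lia.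
have l'_eq : l' = l by have := s_flat k.+1 (leqnn _); rewrite /l'; lia.
by apply: staircase_shape_shift => //; rewrite -l'_eq; apply: IH_eq.
Qed.

Lemma staircase_bound_step k l : k < n.+1 -> 0 < l -> l < s k ->
  \sum_(0 <= i < n.+1) a i = \sum_(0 <= i < k) (s i - 1) + l ->
  staircase_bound n.+1 s a k l.
Proof.
case: k => [|k] k_n l_gt0 l_lt; last first.
  case: (ltnP (l + (s 0 - (a 0).+1)) (s k.+1)) => lg.
  - exact: staircase_bound_succ_small.
  - exact: staircase_bound_succ_large.
rewrite (big_geq (leqnn 0)) add0n => sum_a.
have a0_le : a 0 <= l by move: sum_a; rewrite big_nat_recl //; lia.
have [a0_eq | a0_ne] := eqVneq (a 0) l; first exact: staircase_bound_single.
by apply: staircase_bound_first_spread => //; lia.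
Qed.

End StaircaseStep.

Lemma staircase_bound_holds n (s a : nat -> nat) k l :
  (forall i j, i <= j < n -> s i <= s j) -> (forall i, i < n -> a i < s i) ->
  k < n -> 0 < l -> l < s k ->
  \sum_(0 <= i < n) a i = \sum_(0 <= i < k) (s i - 1) + l ->
  staircase_bound n s a k l.
Proof.
elim: n s a k l => [|n IHn] s a k l s_mono a_lt_s //.
apply: staircase_bound_step => // k' l' k'_n l'_gt0 l'_lt sum_a'.
by apply: IHn => // [i j ij | i i_n]; [apply: s_mono | apply: a_lt_s]; lia.
Qed.

Import GRing.Theory.
Local Open Scope ring_scope.

Lemma subfield0 (F : fieldType) (S : {pred F}) : is_subfield S -> 0 \in S.
Proof. by case=> S1 SB _ _; rewrite -(subrr 1); apply: SB. Qed.

Lemma subfield_card_gt1 (F : finFieldType) (S : {set F}) : is_subfield S -> (1 < #|S|)%N.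
Proof.
move=> SF; have S0 := subfield0 SF; case: SF => S1 _ _ _.
by rewrite (cardsD1 0) S0 (cardsD1 1) !inE oner_eq0 S1.
Qed.

Lemma subfield_expr_card1 (F : finFieldType) (S : {set F}) x :
  is_subfield S -> x \in S -> x != 0 -> x ^+ #|S|.-1 = 1.
Proof.
move=> SF xS x0; have S0 := subfield0 SF; case: SF => _ _ SM _.
set S' := S :\ 0.
have card_S' : #|S'| = #|S|.-1 by rewrite [#|S|](cardsD1 0) S0.
have xS' : [set x * y | y in S'] = S'.
  apply/eqP; rewrite eqEcard card_imset; last exact: mulfI.
  rewrite leqnn andbT; apply/subsetP => z /imsetP[y]; rewrite !inE => /andP[y0 yS] ->.
  by rewrite mulf_neq0 // SM.
have : \prod_(y in S') (x * y) = \prod_(y in S') y.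
  by rewrite -[in RHS]xS' big_imset //= => y z _ _; apply: mulfI.
rewrite big_split /= prodr_const card_S' => prod_eq.
have prod_neq0 : \prod_(y in S') y != 0 by apply/prodf_neq0 => y; rewrite !inE => /andP[].
by apply: (mulIf prod_neq0); rewrite mul1r.
Qed.

(* Reduction of an exponent e modulo the multiplicative order d - 1,
   keeping positive exponents positive: x^e = x^(red_exp d e) on a subfield
   of size d, and red_exp d e < d. *)
Definition red_exp (d e : nat) : nat := if (e < d)%N then e else (e.-1 %% d.-1).+1.

Lemma red_exp_id d e : (e < d)%N -> red_exp d e = e.
Proof. by rewrite /red_exp => ->. Qed.

Lemma red_exp_lt d e : (1 < d)%N -> (red_exp d e < d)%N.
Proof.
rewrite /red_exp => d_gt1; case: ifP => // _.
have : (e.-1 %% d.-1 < d.-1)%N by rewrite ltn_mod; lia.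
lia.
Qed.

Lemma red_exp_le d e : (1 < d)%N -> (red_exp d e <= e)%N.
Proof.
rewrite /red_exp => d_gt1; case: ifP => // /negbT.
by have := leq_mod e.-1 d.-1; lia.
Qed.

Lemma subfield_expr_red (F : finFieldType) (S : {set F}) x e :
  is_subfield S -> x \in S -> x ^+ e = x ^+ red_exp #|S| e.
Proof.
move=> SF xS; have S_gt1 := subfield_card_gt1 SF.
rewrite /red_exp; case: ifP => // /negbT; rewrite -leqNgt => S_le_e.
have [->|x0] := eqVneq x 0; first by rewrite !expr0n; case: e S_le_e => //; lia.
have e_eq : e = ((e.-1 %/ #|S|.-1) * #|S|.-1 + e.-1 %% #|S|.-1).+1%N.
  by rewrite -divn_eq; lia.
by rewrite {1}e_eq exprS exprD mulnC exprM subfield_expr_card1 // expr1n mul1r -exprS.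
Qed.

Lemma in_pffun_on0 (aT : finType) (rT : nmodType) (D : {pred aT}) (f : {ffun aT -> rT}) :
  (f \in pffun_on 0 D predT) = [forall x, (x \notin D) ==> (f x == 0)].
Proof.
apply/pffun_onP/forallP => [[f_supp _] x | f_out].
  by apply/implyP => xD; apply: contraR xD => fx; apply: (subsetP f_supp x); rewrite inE.
split=> //; apply/subsetP => x; rewrite inE; apply: contraR => xD.
exact: (implyP (f_out x)).
Qed.

Lemma card_ord_lt m e : (e <= m)%N -> #|[pred x : 'I_m | (x < e)%N]| = e.
Proof.
move=> e_m; have widen_inj : injective (widen_ord e_m).
  by move=> i j /(congr1 val) ij; apply: val_inj.
rewrite -[RHS](card_ord e) -(card_imset _ widen_inj); apply: eq_card => x.
rewrite inE; apply/idP/imsetP => [x_e | [i _ ->]]; last exact: (ltn_ord i).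
by exists (Ordinal x_e) => //; apply: val_inj.
Qed.

(* Evaluation of polynomials on the grid X = K_0 x ... x K_(n-1).
   Exponent vectors below |F| + 1 are encoded by the finite type expvec;
   coefficient families are functions on expvec. *)
Section GridEvaluation.

Variables (F : finFieldType) (n : nat) (K : 'I_n -> {set F}).
Hypothesis K_subfield : forall i, is_subfield (K i).

Local Notation expvec := {ffun 'I_n -> 'I_#|F|.+1}.

Definition box (e : 'I_n -> nat) : {set expvec} := [set b : expvec | [forall i, (b i < e i)%N]].

Definition mono_of (b : expvec) : 'X_{1..n} := [multinom (b i : nat) | i < n].

Definition expvec_of (m : 'X_{1..n}) : expvec := [ffun i => inord (m i)].

Lemma expvec_ofE (m : 'X_{1..n}) i : (m i <= #|F|)%N -> (expvec_of m i : nat) = m i.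
Proof. by move=> m_i; rewrite ffunE inordK. Qed.

Lemma expvec_ofK (m : 'X_{1..n}) : (forall i, m i <= #|F|)%N -> mono_of (expvec_of m) = m.
Proof. by move=> m_le; apply/mnmP => i; rewrite mnmE expvec_ofE. Qed.

Lemma mono_ofK (b : expvec) : expvec_of (mono_of b) = b.
Proof. by apply/ffunP => i; rewrite ffunE mnmE inord_val. Qed.

Lemma card_box (e : 'I_n -> nat) : (forall i, e i <= #|F|.+1)%N -> #|box e| = (\prod_(i < n) e i)%N.
Proof.
move=> e_le; rewrite (@eq_card _ _ (family (fun i => [pred x : 'I_#|F|.+1 | (x < e i)%N])));
  last by move=> b; rewrite !inE.
rewrite card_family (foldrE 1%N muln) big_map big_enum /=.
by apply: eq_bigr => i _; apply: card_ord_lt.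
Qed.

Lemma card_grid : #|grid K| = (\prod_(i < n) #|K i|)%N.
Proof.
rewrite (@eq_card _ _ (family (fun i => mem (K i)))); last by move=> b; rewrite !inE.
by rewrite card_family (foldrE 1%N muln) big_map big_enum.
Qed.

Definition reduced (m : 'X_{1..n}) : Prop := forall i, (m i < #|K i|)%N.

Definition reduced_box : {set expvec} := box (fun i => #|K i|).

Lemma reduced_le_card (m : 'X_{1..n}) : reduced m -> forall i, (m i <= #|F|)%N.
Proof. by move=> m_red i; apply: leq_trans (ltnW (m_red i)) (max_card _). Qed.

Lemma expvec_of_reduced (m : 'X_{1..n}) : reduced m -> expvec_of m \in reduced_box.
Proof.
by move=> m_red; rewrite inE; apply/forallP => i; rewrite expvec_ofE ?reduced_le_card.
Qed.

(* The componentwise reduced monomial, which has the same values on X. *)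
Definition red_mono (m : 'X_{1..n}) : 'X_{1..n} := [multinom red_exp #|K i| (m i) | i < n].

Lemma red_mono_reduced (m : 'X_{1..n}) : reduced (red_mono m).
Proof. by move=> i; rewrite mnmE red_exp_lt // subfield_card_gt1. Qed.

Lemma red_mono_id (m : 'X_{1..n}) : reduced m -> red_mono m = m.
Proof. by move=> m_red; apply/mnmP => i; rewrite mnmE red_exp_id. Qed.

Lemma mdeg_red_mono_lt (m : 'X_{1..n}) i : (#|K i| <= m i)%N -> (mdeg (red_mono m) < mdeg m)%N.
Proof.
move=> K_le_m; rewrite !mdegE (bigD1 i) //= [ltnRHS](bigD1 i) //= -addSn.
apply: leq_add; first exact: leq_trans (red_mono_reduced m i) K_le_m.
by apply: leq_sum => j _; rewrite mnmE red_exp_le // subfield_card_gt1.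
Qed.

Definition eval_family (x : {ffun 'I_n -> F}) (c : {ffun expvec -> F}) : F :=
  \sum_(b in reduced_box) c b * \prod_(i < n) x i ^+ b i.

(* The coefficients of the reduction of q, i.e. of q modulo x_i^|K_i| = x_i. *)
Definition red_coeffs (q : {mpoly F[n]}) : {ffun expvec -> F} :=
  [ffun b => if b \in reduced_box then
      \sum_(m <- msupp q | red_mono m == mono_of b) q@_m else 0].

Lemma red_coeffs_supp q : red_coeffs q \in pffun_on 0 reduced_box predT.
Proof.
by rewrite in_pffun_on0; apply/forallP => b; apply/implyP => /negbTE b_out; rewrite ffunE b_out.
Qed.

Lemma eval_red_coeffs q x : x \in grid K -> q.@[x] = eval_family x (red_coeffs q).
Proof.
rewrite inE => /forallP xK; rewrite mevalE.
transitivity (\sum_(m <- msupp q) q@_m * \prod_(i < n) x i ^+ red_mono m i).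
  apply: eq_bigr => m _; congr (_ * _); apply: eq_bigr => i _.
  by rewrite mnmE; apply: subfield_expr_red.
rewrite /eval_family (eq_bigr (fun b => \sum_(m <- msupp q)
  (if red_mono m == mono_of b then q@_m * \prod_(i < n) x i ^+ b i else 0))); last first.
  move=> b b_red; rewrite ffunE b_red big_distrl /= big_mkcond /=.
  by apply: eq_bigr => m _; case: ifP.
rewrite exchange_big /=; apply: eq_bigr => m _.
have m_red := red_mono_reduced m; have m_le := reduced_le_card m_red.
rewrite (bigD1 _ (expvec_of_reduced m_red)) /= expvec_ofK // eqxx.
rewrite [X in _ + X]big1 ?addr0.
  by congr (_ * _); apply: eq_bigr => i _; rewrite expvec_ofE.
move=> b /andP[_ b_ne]; case: eqP => // red_eq; move: b_ne.
by rewrite red_eq mono_ofK eqxx.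
Qed.

Definition delta (p : {ffun 'I_n -> F}) : {mpoly F[n]} :=
  \prod_(i < n) (1 - ('X_i - (p i)%:MP) ^+ #|K i|.-1).

Lemma eval_delta p x : x \in grid K -> p \in grid K -> (delta p).@[x] = (x == p)%:R.
Proof.
rewrite !inE => /forallP xK /forallP pK.
rewrite /delta rmorph_prod /=.
under eq_bigr => i _ do rewrite rmorphB rmorph1 rmorphXn rmorphB /= mevalXU mevalC.
have [->|x_ne_p] := eqVneq x p.
  apply: big1 => i _; rewrite subrr expr0n.
  by have := subfield_card_gt1 (K_subfield i); case: #|K i| => [|[|d]] //= _; rewrite subr0.
have : ~~ [forall i, x i == p i].
  by apply: contra x_ne_p => /forallP xp; apply/eqP/ffunP => i; apply/eqP.
rewrite negb_forall => /existsP[i xi_ne].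
rewrite (bigD1 i) //= subfield_expr_card1 ?subrr ?mul0r ?subr_eq0 //.
by case: (K_subfield i) => _ KB _ _; apply: KB.
Qed.

Lemma interpolation (g : {ffun {ffun 'I_n -> F} -> F}) x : x \in grid K ->
  (\sum_(p in grid K) g p *: delta p).@[x] = g x.
Proof.
move=> x_grid; rewrite rmorph_sum /= (bigD1 x) //= big1 ?addr0.
  by rewrite mevalZ eval_delta // eqxx mulr1.
by move=> p /andP[p_grid p_ne]; rewrite mevalZ eval_delta // eq_sym (negbTE p_ne) mulr0.
Qed.

Definition grid_values (c : {ffun expvec -> F}) : {ffun {ffun 'I_n -> F} -> F} :=
  [ffun x => if x \in grid K then eval_family x c else 0].

Lemma grid_values_onto g : g \in pffun_on 0 (grid K) predT ->
  g \in [set grid_values c | c in pffun_on 0 reduced_box predT].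
Proof.
move=> g_supp; apply/imsetP.
exists (red_coeffs (\sum_(p in grid K) g p *: delta p)); first exact: red_coeffs_supp.
apply/ffunP => x; rewrite ffunE; case: ifP => x_grid; last first.
  by move: g_supp; rewrite in_pffun_on0 => /forallP /(_ x); rewrite x_grid => /eqP.
by rewrite -eval_red_coeffs // interpolation.
Qed.

(* There are as many reduced coefficient families as functions on X, so
   the onto map grid_values is injective. *)
Lemma grid_values_inj : {in pffun_on 0 reduced_box predT &, injective grid_values}.
Proof.
apply/imset_injP; rewrite eqn_leq leq_imset_card /=.
apply: (@leq_trans #|pffun_on (0 : F) (grid K) predT|).
  by rewrite !card_pffun_on card_grid card_box // => i; exact/leqW/max_card.
by apply/subset_leq_card/subsetP => g; apply: grid_values_onto.
Qed.

Lemma reduced_family_eq0 c : c \in pffun_on 0 reduced_box predT ->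
  (forall x, x \in grid K -> eval_family x c = 0) -> forall b, c b = 0.
Proof.
move=> c_supp c_vanish.
have zero_supp : [ffun=> 0] \in pffun_on (0 : F) reduced_box predT.
  by rewrite in_pffun_on0; apply/forallP => b; rewrite ffunE eqxx implybT.
have values_eq : grid_values c = grid_values [ffun=> 0].
  apply/ffunP => x; rewrite !ffunE; case: ifP => // x_grid.
  by rewrite c_vanish // /eval_family big1 // => b _; rewrite ffunE mul0r.
by move=> b; rewrite (grid_values_inj c_supp zero_supp values_eq) ffunE.
Qed.

(* A reduced leading monomial survives reduction: every other monomial of q
   reduces either to itself or to a monomial of degree below deg q. *)
Lemma red_coeffs_mlead q : q != 0 -> reduced (mlead q) ->
  red_coeffs q (expvec_of (mlead q)) = q@_(mlead q).
Proof.
move=> q_neq0 lead_red; have lead_le := reduced_le_card lead_red.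
rewrite ffunE expvec_of_reduced // expvec_ofK //.
rewrite big_mkcond (bigD1_seq (mlead q)) ?msupp_uniq ?mlead_supp //= red_mono_id // eqxx.
rewrite big1_seq ?addr0 // => m /andP[m_ne m_supp]; case: eqP => // red_eq; exfalso.
have [/forallP m_red|] := boolP [forall i, m i < #|K i|]%N.
  by move: m_ne; rewrite -red_eq red_mono_id ?eqxx.
rewrite negb_forall => /existsP[i]; rewrite -leqNgt => /mdeg_red_mono_lt.
by have := msize_mdeg_lt m_supp; rewrite -mlead_deg // red_eq; lia.
Qed.

Lemma nonvanishing q : q != 0 -> reduced (mlead q) ->
  exists2 x, x \in grid K & q.@[x] != 0.
Proof.
move=> q_neq0 lead_red; apply/exists_inP; apply: contraT.
rewrite negb_exists_in => /forall_inP q_zero.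
have red0 : forall b, red_coeffs q b = 0.
  apply: reduced_family_eq0 (red_coeffs_supp q) _ => x x_grid.
  by rewrite -eval_red_coeffs //; apply/eqP/negPn/q_zero.
move: (red0 (expvec_of (mlead q))); rewrite red_coeffs_mlead // => /eqP.
by rewrite mleadc_eq0 (negbTE q_neq0).
Qed.

Lemma vanishing_multiple_eq0 f h : f != 0 ->
  (forall m, h@_m != 0 -> reduced (mlead f + m)%MM) ->
  (forall x, x \in grid K -> (f * h).@[x] = 0) -> h = 0.
Proof.
move=> f_neq0 h_shift fh_vanish; apply/eqP; apply: contraT => h_neq0.
have fh_neq0 : f * h != 0 by rewrite mulf_neq0.
have [|x x_grid] := nonvanishing fh_neq0.
  by rewrite mleadM //; apply: h_shift; rewrite mleadc_eq0.
by rewrite fh_vanish ?eqxx.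
Qed.

Definition poly_of_family (e : 'I_n -> nat) (c : {ffun expvec -> F}) : {mpoly F[n]} :=
  \sum_(b in box e) c b *: 'X_[mono_of b].

Lemma poly_of_family_coef e c m :
  (poly_of_family e c)@_m = \sum_(b in box e) c b * (mono_of b == m)%:R.
Proof. by rewrite /poly_of_family raddf_sum /=; apply: eq_bigr => b _; rewrite mcoeffZ mcoeffX. Qed.

Lemma poly_of_family_coef_box e c b : b \in box e -> (poly_of_family e c)@_(mono_of b) = c b.
Proof.
move=> b_box; rewrite poly_of_family_coef (bigD1 b) //= eqxx mulr1 big1 ?addr0 //.
move=> b' /andP[_ b'_ne]; case: eqP => [mono_eq|]; last by rewrite mulr0.
by move: b'_ne; rewrite -(mono_ofK b') mono_eq mono_ofK eqxx.
Qed.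

Lemma poly_of_family_supp e c m :
  (poly_of_family e c)@_m != 0 -> exists2 b, b \in box e & mono_of b = m.
Proof.
rewrite poly_of_family_coef => coef_neq0.
have : ~~ [forall b, (b \in box e) ==> (mono_of b != m)].
  apply: contra coef_neq0 => /forallP no_b; apply/eqP; apply: big1 => b b_box.
  by have := implyP (no_b b) b_box; case: eqP => //; rewrite mulr0.
by rewrite negb_forall => /existsP[b]; rewrite negb_imply negbK => /andP[b_box /eqP]; exists b.
Qed.

(* The multiples f * h, with h supported on the box of those
   exponents, restrict injectively to the non-zero set of f. *)
Lemma footprint_bound f : f != 0 -> reduced (mlead f) ->
  (\prod_(i < n) (#|K i| - mlead f i) <= #|[set x in grid K | f.@[x] != 0%R]|)%N.
Proof.
move=> f_neq0 lead_red; set e := fun i => (#|K i| - mlead f i)%N.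
set S := [set x in grid K | f.@[x] != 0]; set D := pffun_on (0 : F) (box e) predT.
pose values (c : {ffun expvec -> F}) : {ffun {ffun 'I_n -> F} -> F} :=
  [ffun x => if x \in S then (f * poly_of_family e c).@[x] else 0].
have values_inj : {in D &, injective values}.
  move=> c1 c2 c1_supp c2_supp /ffunP values_eq.
  set c := [ffun b => c1 b - c2 b].
  have h_eq : poly_of_family e c = poly_of_family e c1 - poly_of_family e c2.
    by rewrite -sumrB; apply: eq_bigr => b _; rewrite ffunE scalerBl.
  have h0 : poly_of_family e c = 0.
    apply: (vanishing_multiple_eq0 f_neq0) => [m /poly_of_family_supp[b b_box <-] i | x x_grid].
      by move: b_box; rewrite inE mnmDE mnmE => /forallP /(_ i); rewrite /e; lia.
    have [x_S | x_nS] := boolP (x \in S).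
      by have := values_eq x; rewrite !ffunE x_S h_eq mulrBr rmorphB /= => ->; rewrite subrr.
    by move: x_nS; rewrite inE x_grid rmorphM /= => /negbNE /eqP ->; rewrite mul0r.
  apply/ffunP => b; have [b_box | b_out] := boolP (b \in box e).
    have := poly_of_family_coef_box c b_box; rewrite h0 mcoeff0 ffunE.
    by move/esym/eqP; rewrite subr_eq0 => /eqP.
  move: c1_supp c2_supp; rewrite !in_pffun_on0 => /forallP /(_ b) /implyP /(_ b_out) /eqP ->.
  by move=> /forallP /(_ b) /implyP /(_ b_out) /eqP ->.
have values_supp : [set values c | c in D] \subset pffun_on 0 S predT.
  apply/subsetP => g /imsetP[c _ ->]; rewrite in_pffun_on0; apply/forallP => x.
  by apply/implyP => /negbTE x_nS; rewrite ffunE x_nS.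
move: (subset_leq_card values_supp); rewrite card_in_imset // !card_pffun_on.
rewrite leq_exp2l ?card_finNzRing_gt1 // card_box // => i.
by apply: leq_trans (leq_subr _ _) _; exact/leqW/max_card.
Qed.

End GridEvaluation.

Lemma hweight_Psi (F : finFieldType) n (K : 'I_n -> {set F}) (f : {mpoly F[n]}) :
  hweight (Psi K f) = #|[set x in grid K | f.@[x] != 0]|.
Proof.
rewrite /hweight /Psi count_map -size_filter cardE /enum_mem -filter_predI.
by apply/congr1/eq_filter => x; rewrite /= !inE andbC.
Qed.

Lemma staircase_of_tight_bound n (s a : 'I_n -> nat) (k : 'I_n) l :
  (forall i j : 'I_n, i <= j -> s i <= s j)%N -> (forall i, a i < s i)%N ->
  (0 < l)%N -> (l < s k)%N ->
  (\sum_(i < n) a i = \sum_(i < n | i < k) (s i - 1) + l)%N ->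
  (\prod_(i < n) (s i - a i) <= (s k - l) * \prod_(i < n | k < i) s i)%N ->
  exists (j : 'I_k.+1) (t : 'I_k.+1 -> 'I_n),
    [/\ (s k - l <= s (widen_ord (ltn_ord k) j))%N,
        injective t,
        forall i, s (t i) = s (widen_ord (ltn_ord k) i),
        forall i, a (t i) = (if i == j then s (widen_ord (ltn_ord k) i) - (s k - l)
                             else s (widen_ord (ltn_ord k) i) - 1)%N
      & forall x, (forall i, t i != x) -> a x = 0%N].
Proof.
move=> s_mono a_lt_s l_gt0 l_lt sum_a prod_le.
pose sN i := s (insubd k i); pose aN i := a (insubd k i).
have sNE (o : 'I_n) : sN o = s o by rewrite /sN valKd.
have aNE (o : 'I_n) : aN o = a o by rewrite /aN valKd.
have sum_aN : (\sum_(0 <= i < n) aN i = \sum_(0 <= i < k) (sN i - 1) + l)%N.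
  rewrite big_mkord (eq_bigr _ (fun i _ => aNE i)) sum_a; congr (_ + _)%N.
  rewrite big_mkord (big_ord_widen n (fun i => sN i - 1)%N (ltnW (ltn_ord k))).
  by apply: eq_bigr => i _; rewrite sNE.
have prod_aN : (\prod_(0 <= i < n) (sN i - aN i) <= (sN k - l) * \prod_(k.+1 <= i < n) sN i)%N.
  rewrite big_mkord big_geq_mkord sNE (eq_bigr _ (fun i _ => congr2 subn (sNE i) (aNE i))).
  by rewrite (eq_bigr _ (fun i _ => sNE i)).
have sN_mono i j : (i <= j < n)%N -> (sN i <= sN j)%N.
  by move=> /andP[ij jn]; apply: s_mono; rewrite !insubdK //; exact: leq_ltn_trans jn.
have [_ /(_ prod_aN)] := @staircase_bound_holds n sN aN k l sN_mono (fun i _ => a_lt_s _)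
  (ltn_ord k) l_gt0 ltac:(by rewrite sNE) sum_aN.
move=> [j [t [[jk sj] t_lt t_inj a_t a_out]]].
have t_n (i : 'I_k.+1) : (t i < n)%N by have [] := t_lt i (ltn_ord i).
pose t' (i : 'I_k.+1) : 'I_n := insubd k (t i).
have t'E i : val (t' i) = t i by rewrite insubdK //; exact: t_n.
have jE : widen_ord (ltn_ord k) (inord j : 'I_k.+1) = j :> nat by rewrite /= inordK.
exists (inord j), t'; split.
- by rewrite -!sNE jE.
- move=> i1 i2 /(congr1 val); rewrite !t'E => /(t_inj _ _ (ltn_ord i1) (ltn_ord i2)).
  exact: val_inj.
- by move=> i; rewrite -!sNE t'E /=; have [] := t_lt i (ltn_ord i).
- move=> i; rewrite -aNE -!sNE t'E a_t; last exact: ltn_ord i.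
  by rewrite -(inj_eq val_inj) /= inordK.
- move=> x x_out; rewrite -aNE a_out // => i ik; have := x_out (Ordinal (ik : (i < k.+1)%N)).
  by apply: contraNN => /eqP t_x; apply/eqP/val_inj; rewrite t'E.
Qed.

Lemma chain_card_eq (T : finType) n (K : 'I_n -> {set T}) (i j : 'I_n) :
  (forall i j : 'I_n, (i <= j)%N -> K i \subset K j) -> #|K i| = #|K j| -> K i = K j.
Proof.
move=> K_chain card_eq; case: (leqP i j) => [ij | /ltnW ji].
  by apply/eqP; rewrite eqEcard K_chain // card_eq leqnn.
by apply/esym/eqP; rewrite eqEcard K_chain // card_eq leqnn.
Qed.

Unset Implicit Arguments.

Theorem mainTheorem9 (F : finFieldType) (n : nat) (K : 'I_n -> {set F})
  (HKsub : forall i, is_subfield (K i))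
  (Hchain : forall i j : 'I_n, (i <= j)%N -> K i \subset K j)
  (f : {mpoly F[n]}) (k : 'I_n) (l : nat)
  (Hl0 : (0 < l)%N) (Hl1 : (l <= #|K k| - 1)%N)
  (Hdeg : msize f = ((\sum_(i < n | (i < k)%N) (#|K i| - 1)) + l).+1%N)
  (Hred : forall m : 'X_{1..n}, m \in msupp f -> forall i : 'I_n, (m i < #|K i|)%N)
  (Hw : hweight (Psi K f) = ((#|K k| - l) * \prod_(i < n | (k < i)%N) #|K i|)%N) :
  exists (j : 'I_k.+1) (t : 'I_k.+1 -> 'I_n),
    [/\ (#|K (widen_ord (ltn_ord k) j)| >= #|K k| - l)%N,
        injective t,
        forall i : 'I_k.+1, K (t i) = K (widen_ord (ltn_ord k) i)
      & exists m : 'X_{1..n},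
          [/\ f@_m != 0,
              forall i : 'I_k.+1, m (t i) =
                (if i == j then #|K (widen_ord (ltn_ord k) i)| - (#|K k| - l)
                 else #|K (widen_ord (ltn_ord k) i)| - 1)%N
            & forall x : 'I_n, (forall i, t i != x) -> m x = 0%N]].
Proof.
have f_neq0 : f != 0 by apply: contra_eq_neq Hdeg => ->; rewrite msize0.
have lead_red : reduced K (mlead f) by apply: Hred; exact: mlead_supp.
have card_mono (i j : 'I_n) : (i <= j)%N -> (#|K i| <= #|K j|)%N.
  by move=> ij; apply/subset_leq_card/Hchain.
have l_lt : (l < #|K k|)%N by have := subfield_card_gt1 (HKsub k); lia.
have deg_lead : (\sum_(i < n) mlead f i = \sum_(i < n | (i < k)%N) (#|K i| - 1) + l)%N.
  by apply: succn_inj; rewrite -mdegE mlead_deg.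
have weight_ge := footprint_bound HKsub f_neq0 lead_red.
rewrite -hweight_Psi Hw in weight_ge.
have [j [t [s_j t_inj s_t a_t a_out]]] :=
  staircase_of_tight_bound card_mono lead_red Hl0 l_lt deg_lead weight_ge.
exists j, t; split => // [i | ]; first exact: chain_card_eq.
by exists (mlead f); split; rewrite ?mleadc_eq0.
Qed.
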